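(* Suppose that $G \leq \mathrm{Homeo}^+(\mathbb{R})$ acts on $\mathbb{R}$ with no fixed points, and that $G^0 \neq 1$. Then the transitivity degree of $G$ is at most $2$.
   Context: $\mathrm{Homeo}^+(\mathbb{R})$ is the group of orientation-preserving homeomorphisms of $\mathbb{R}$, and $G^0$ is the subgroup of compactly supported elements of $G$. The transitivity degree of a group is the supremum of all $k$ such that it admits a faithful action on a set that is transitive on ordered $k$-tuples of distinct elements. *)

From Stdlib Require Import Reals.
Open Scope R_scope.

Definition homeo_plus (f : R -> R) : Prop :=
  continuity f /\
  (forall x y, x < y -> f x < f y) /\
  exists g : R -> R, continuity g /\
    (forall x, g (f x) = x) /\ (forall y, f (g y) = y).

Definition subgroup_homeo_plus (G : (R -> R) -> Prop) : Prop :=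
  (forall f, G f -> homeo_plus f) /\
  G (fun x => x) /\
  (forall f g, G f -> G g -> G (fun x => f (g x))) /\
  (forall f, G f -> exists g, G g /\
      (forall x, g (f x) = x) /\ (forall y, f (g y) = y)).

Definition no_global_fixed_point (G : (R -> R) -> Prop) : Prop :=
  forall x : R, exists g, G g /\ g x <> x.

(* g has compact support: its support (closure of {x | g x <> x}) is
   compact, i.e. bounded. *)
Definition compactly_supported (g : R -> R) : Prop :=
  exists a b : R, forall x, (x < a \/ b < x) -> g x = x.

(* G^0 <> 1: G contains a nontrivial compactly supported element. *)
Definition G0_nontrivial (G : (R -> R) -> Prop) : Prop :=
  exists g, G g /\ compactly_supported g /\ exists x, g x <> x.

Definition is_group_action (G : (R -> R) -> Prop) (X : Type)
  (act : (R -> R) -> X -> X) : Prop :=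
  (forall x, act (fun t => t) x = x) /\
  (forall f g, G f -> G g -> forall x, act (fun t => f (g t)) x = act f (act g x)).

Definition faithful_action (G : (R -> R) -> Prop) (X : Type)
  (act : (R -> R) -> X -> X) : Prop :=
  forall g, G g -> (forall x, act g x = x) -> forall t, g t = t.

Definition distinct_tuple (X : Type) (k : nat) (s : nat -> X) : Prop :=
  forall i j, (i < k)%nat -> (j < k)%nat -> s i = s j -> i = j.

Definition k_transitive (G : (R -> R) -> Prop) (X : Type)
  (act : (R -> R) -> X -> X) (k : nat) : Prop :=
  (exists s, distinct_tuple X k s) /\
  forall s t, distinct_tuple X k s -> distinct_tuple X k t ->
    exists g, G g /\ forall i, (i < k)%nat -> act g (s i) = t i.

Definition transitivity_degree_le (G : (R -> R) -> Prop) (d : nat) : Prop :=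
  forall (X : Type) (act : (R -> R) -> X -> X) (k : nat),
    is_group_action G X act -> faithful_action G X act ->
    k_transitive G X act k -> (k <= d)%nat.

From Stdlib Require Import Reals Lra Lia Classical FunctionalExtensionality.
Open Scope R_scope.

(** Suppose [G] acts faithfully and 3-transitively on a set [X].  For [t] in [R],
    let [x ~t y] mean that some element of [G] supported in [(t, +oo)] maps [x]
    to [y].  The sets [{t | x ~t y}] are down-closed, hence nested, and
    conjugating by a 3-cycle of [x, y, z] shows that all of them coincide, so
    their common value [T] is invariant under [G].  A
    nontrivial compactly supported element makes [T] nonempty.  If [T] is
    bounded, its supremum is a global fixed point.  Otherwise every group of
    elements supported to the right of [t] is transitive on [X]; then a
    compactly supported [g] can be corrected by such an element into one that
    fixes a point of [X] and commutes with a transitive set, so acts trivially,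
    contradicting faithfulness. *)

Definition supported_in (f : R -> R) (a b : R) : Prop :=
  forall u, u < a \/ b < u -> f u = u.

Lemma strict_increasing_le f :
  strict_increasing f -> forall x y, x <= y -> f x <= f y.
Proof. intros Hf x y [Hxy | <-]; [left; apply Hf, Hxy | right; reflexivity]. Qed.

Lemma supported_in_inverse f g a b :
  supported_in f a b -> (forall u, g (f u) = u) -> supported_in g a b.
Proof. intros Hf Hgf u Hu. rewrite <- (Hf u Hu) at 1. apply Hgf. Qed.

Lemma supported_in_comp f g a b c d :
  supported_in f a b -> supported_in g c d ->
  supported_in (fun u => f (g u)) (Rmin a c) (Rmax b d).
Proof.
  intros Hf Hg u Hu.
  pose proof (Rmin_l a c); pose proof (Rmin_r a c).
  pose proof (Rmax_l b d); pose proof (Rmax_r b d).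
  rewrite Hg by lra. apply Hf. lra.
Qed.

Lemma supported_in_conj f fi k c d :
  strict_increasing f -> (forall u, f (fi u) = u) -> supported_in k c d ->
  supported_in (fun u => f (k (fi u))) (f c) (f d).
Proof.
  intros Hf Hffi Hk u Hu. rewrite Hk; [apply Hffi |].
  destruct Hu as [Hu | Hu]; [left | right]; apply Rnot_le_lt; intro Hle;
    apply (strict_increasing_le f Hf) in Hle; rewrite Hffi in Hle; lra.
Qed.

(* Both maps fix a point [z] between the supports, and being increasing they
   preserve each side of [z]. *)
Lemma supported_in_commute f g a b c d :
  strict_increasing f -> strict_increasing g ->
  supported_in f a b -> supported_in g c d -> b < c ->
  forall u, f (g u) = g (f u).
Proof.
  intros If Ig Hf Hg Hbc u.
  set (z := (b + c) / 2).
  assert (Hfz : f z = z) by (apply Hf; unfold z; lra).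
  assert (Hgz : g z = z) by (apply Hg; unfold z; lra).
  destruct (Rtotal_order u z) as [Hu | [-> | Hu]].
  - assert (f u < z) by (rewrite <- Hfz; apply If, Hu).
    now rewrite (Hg u), (Hg (f u)) by (unfold z in *; lra).
  - now rewrite Hgz, Hfz, Hgz.
  - assert (z < g u) by (rewrite <- Hgz; apply Ig, Hu).
    now rewrite (Hf u), (Hf (g u)) by (unfold z in *; lra).
Qed.

Lemma down_closed_nested (P Q : R -> Prop) :
  (forall t t', t' <= t -> P t -> P t') ->
  (forall t t', t' <= t -> Q t -> Q t') ->
  (forall t, P t -> Q t) \/ (forall t, Q t -> P t).
Proof.
  intros HP HQ. destruct (classic (forall t, P t -> Q t)) as [HPQ | HPQ];
    [left; exact HPQ | right].
  apply not_all_ex_not in HPQ as [t0 HPQ]. apply imply_to_and in HPQ as [HPt0 HQt0].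
  intros t HQt. destruct (Rle_lt_dec t t0) as [Ht | Ht].
  - exact (HP t0 t Ht HPt0).
  - exfalso. apply HQt0, (HQ t); [lra | exact HQt].
Qed.

Lemma down_closed_unbounded (P : R -> Prop) :
  (forall t t', t' <= t -> P t -> P t') -> ~ bound P -> forall t, P t.
Proof.
  intros HP Hunb t. apply NNPP. intro HPt. apply Hunb. exists t. intros s Hs.
  destruct (Rle_lt_dec s t) as [Hst | Hts]; [exact Hst |].
  exfalso. apply HPt, (HP s); [lra | exact Hs].
Qed.

Lemma is_lub_invariant_fixed (S : R -> Prop) g gi m :
  strict_increasing g -> strict_increasing gi ->
  (forall x, gi (g x) = x) -> (forall y, g (gi y) = y) ->
  (forall t, S t -> S (g t)) -> (forall t, S t -> S (gi t)) ->
  is_lub S m -> g m = m.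
Proof.
  intros Ig Igi Hgig Hggi HSg HSgi [Hub Hleast].
  assert (m <= g m).
  { apply Hleast. intros s Hs. rewrite <- (Hggi s).
    apply (strict_increasing_le g Ig), Hub, HSgi, Hs. }
  assert (m <= gi m).
  { apply Hleast. intros s Hs. rewrite <- (Hgig s).
    apply (strict_increasing_le gi Igi), Hub, HSg, Hs. }
  assert (g m <= m).
  { rewrite <- (Hggi m) at 2. apply (strict_increasing_le g Ig). assumption. }
  lra.
Qed.

Lemma distinct_tuple_assign (X : Type) k (s : nat -> X) i p :
  distinct_tuple X k s -> (i < k)%nat -> (forall j, (j < i)%nat -> s j <> p) ->
  exists s', distinct_tuple X k s' /\ (forall j, (j < i)%nat -> s' j = s j) /\ s' i = p.
Proof.
  intros Hs Hi Hp.
  destruct (classic (exists j, (j < k)%nat /\ s j = p)) as [[j [Hj Hsj]] | Hnew].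
  - (* [p] already occurs at a position [j >= i]: swap positions [i] and [j] *)
    assert (Hij : (i <= j)%nat)
      by (destruct (Nat.le_gt_cases i j); [assumption | exfalso; exact (Hp j H Hsj)]).
    exists (fun n => if Nat.eqb n i then s j else if Nat.eqb n j then s i else s n).
    split; [| split].
    + intros a b Ha Hb E.
      destruct (Nat.eqb_spec a i), (Nat.eqb_spec b i); subst; auto;
        try destruct (Nat.eqb_spec a j); try destruct (Nat.eqb_spec b j); subst; auto;
        apply Hs in E; lia.
    + intros n Hn. destruct (Nat.eqb_spec n i); [lia |].
      destruct (Nat.eqb_spec n j); [lia | reflexivity].
    + now rewrite Nat.eqb_refl.
  - exists (fun n => if Nat.eqb n i then p else s n). split; [| split].
    + intros a b Ha Hb E.
      destruct (Nat.eqb_spec a i), (Nat.eqb_spec b i); try lia.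
      * exfalso. apply Hnew. exists b. auto.
      * exfalso. apply Hnew. exists a. auto.
      * apply Hs; assumption.
    + intros n Hn. destruct (Nat.eqb_spec n i); [lia | reflexivity].
    + now rewrite Nat.eqb_refl.
Qed.

Lemma distinct_tuple_prefix3 (X : Type) k (s : nat -> X) x y z :
  (3 <= k)%nat -> distinct_tuple X k s -> x <> y -> y <> z -> x <> z ->
  exists t, distinct_tuple X k t /\ t 0%nat = x /\ t 1%nat = y /\ t 2%nat = z.
Proof.
  intros Hk Hs Hxy Hyz Hxz.
  destruct (distinct_tuple_assign X k s 0 x Hs ltac:(lia) ltac:(lia))
    as [t1 [D1 [_ E1]]].
  destruct (distinct_tuple_assign X k t1 1 y D1 ltac:(lia)) as [t2 [D2 [P2 E2]]].
  { intros j Hj. replace j with 0%nat by lia. now rewrite E1. }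
  destruct (distinct_tuple_assign X k t2 2 z D2 ltac:(lia)) as [t3 [D3 [P3 E3]]].
  { intros [| [| j]] Hj; [rewrite P2, E1 by lia | rewrite E2 | lia]; assumption. }
  exists t3. repeat split; [exact D3 | | | exact E3].
  - now rewrite P3, P2, E1 by lia.
  - now rewrite P3, E2 by lia.
Qed.

Definition triply_transitive (G : (R -> R) -> Prop) (X : Type)
  (act : (R -> R) -> X -> X) : Prop :=
  forall x y z x' y' z' : X,
    x <> y -> y <> z -> x <> z -> x' <> y' -> y' <> z' -> x' <> z' ->
    exists f, G f /\ act f x = x' /\ act f y = y' /\ act f z = z'.

Lemma k_transitive_triply_transitive G X act k :
  (3 <= k)%nat -> k_transitive G X act k -> triply_transitive G X act.
Proof.
  intros Hk [[s Hs] Htrans] x y z x' y' z' Hxy Hyz Hxz Hxy' Hyz' Hxz'.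
  destruct (distinct_tuple_prefix3 X k s x y z Hk Hs Hxy Hyz Hxz)
    as [t [Dt [Et0 [Et1 Et2]]]].
  destruct (distinct_tuple_prefix3 X k s x' y' z' Hk Hs Hxy' Hyz' Hxz')
    as [t' [Dt' [Et0' [Et1' Et2']]]].
  destruct (Htrans t t' Dt Dt') as [f [Gf Hf]].
  exists f. subst. repeat split; [exact Gf | apply Hf; lia ..].
Qed.

Lemma faithful_moves_point G X act g :
  faithful_action G X act -> G g -> (exists p, g p <> p) -> exists x, act g x <> x.
Proof.
  intros Hfaith Gg [p Hp]. apply NNPP. intro Hfix. apply Hp, Hfaith; [exact Gg |].
  intro x. apply NNPP. intro Hx. apply Hfix. exists x. exact Hx.
Qed.

Section RightOrbits.

Variable G : (R -> R) -> Prop.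
Variable X : Type.
Variable act : (R -> R) -> X -> X.
Hypothesis HG : subgroup_homeo_plus G.
Hypothesis Hact : is_group_action G X act.

Lemma G_strict_increasing f : G f -> strict_increasing f.
Proof. intro Gf. exact (proj1 (proj2 (proj1 HG f Gf))). Qed.

Lemma G_id : G (fun x => x).
Proof. exact (proj1 (proj2 HG)). Qed.

Lemma G_comp f g : G f -> G g -> G (fun x => f (g x)).
Proof. exact (proj1 (proj2 (proj2 HG)) f g). Qed.

Lemma G_inv f : G f ->
  exists g, G g /\ (forall x, g (f x) = x) /\ (forall y, f (g y) = y).
Proof. exact (proj2 (proj2 (proj2 HG)) f). Qed.

Lemma act_comp f g x : G f -> G g -> act (fun t => f (g t)) x = act f (act g x).
Proof. intros Gf Gg. exact (proj2 Hact f g Gf Gg x). Qed.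

Lemma act_cancel f g x :
  G f -> G g -> (forall u, g (f u) = u) -> act g (act f x) = x.
Proof.
  intros Gf Gg Hgf. rewrite <- act_comp by assumption.
  replace (fun t => g (f t)) with (fun t : R => t)
    by (extensionality t; now rewrite Hgf).
  apply (proj1 Hact).
Qed.

Definition supported_right_of (t : R) (g : R -> R) : Prop :=
  G g /\ exists c d, t < c /\ supported_in g c d.

Definition right_orbit (t : R) (x y : X) : Prop :=
  exists g, supported_right_of t g /\ act g x = y.

Lemma right_orbit_refl t x : right_orbit t x x.
Proof.
  exists (fun u => u). split; [split; [exact G_id |] | apply (proj1 Hact)].
  exists (t + 1), (t + 1). split; [lra | intros u _; reflexivity].
Qed.

Lemma right_orbit_sym t x y : right_orbit t x y -> right_orbit t y x.
Proof.
  intros [g [[Gg [c [d [Hc Hg]]]] <-]].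
  destruct (G_inv g Gg) as [gi [Ggi [Hgig _]]].
  exists gi. split; [split; [exact Ggi |] | now apply act_cancel].
  exists c, d. split; [exact Hc | exact (supported_in_inverse g gi c d Hg Hgig)].
Qed.

Lemma right_orbit_antimono t t' x y :
  t' <= t -> right_orbit t x y -> right_orbit t' x y.
Proof.
  intros Ht [g [[Gg [c [d [Hc Hg]]]] Hxy]].
  exists g. split; [split; [exact Gg |] | exact Hxy].
  exists c, d. split; [lra | exact Hg].
Qed.

Lemma right_orbit_conj f t x y :
  G f -> right_orbit t x y -> right_orbit (f t) (act f x) (act f y).
Proof.
  intros Gf [g [[Gg [c [d [Hc Hg]]]] <-]].
  destruct (G_inv f Gf) as [fi [Gfi [Hfif Hffi]]].
  pose proof (G_strict_increasing f Gf) as If.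
  exists (fun u => f (g (fi u))). split; [split |].
  - apply G_comp, G_comp; assumption.
  - exists (f c), (f d). split; [apply If, Hc | exact (supported_in_conj f fi g c d If Hffi Hg)].
  - rewrite (act_comp f (fun u => g (fi u))) by (assumption || apply G_comp; assumption).
    rewrite (act_comp g fi), (act_cancel f fi) by assumption. reflexivity.
Qed.

Lemma right_orbit_conj_iff f t x y :
  G f -> right_orbit (f t) (act f x) (act f y) <-> right_orbit t x y.
Proof.
  intro Gf. split; [| apply right_orbit_conj, Gf].
  destruct (G_inv f Gf) as [fi [Gfi [Hfif _]]].
  intro Hf. apply (right_orbit_conj fi) in Hf; [| exact Gfi].
  rewrite Hfif, !act_cancel in Hf by assumption. exact Hf.
Qed.

Lemma right_orbit_incl_conj f a b c d :
  G f -> (forall t, right_orbit t a b -> right_orbit t c d) ->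
  forall t, right_orbit t (act f a) (act f b) -> right_orbit t (act f c) (act f d).
Proof.
  intros Gf Hincl t.
  destruct (G_inv f Gf) as [fi [_ [_ Hffi]]].
  rewrite <- (Hffi t), !right_orbit_conj_iff by exact Gf. apply Hincl.
Qed.

(* The sets [{t | right_orbit t _ _}] are nested, and an inclusion between two
   of them is carried around the 3-cycle by conjugation until it closes up. *)
Lemma right_orbit_rotate f x y z :
  G f -> act f x = y -> act f y = z -> act f z = x ->
  forall t, right_orbit t x y <-> right_orbit t y z.
Proof.
  intros Gf Ex Ey Ez.
  assert (Hrot : forall a b c d,
      (forall t, right_orbit t a b -> right_orbit t c d) ->
      forall t, right_orbit t (act f a) (act f b) -> right_orbit t (act f c) (act f d))
    by (intros; eapply right_orbit_incl_conj; eauto).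
  destruct (down_closed_nested _ _ (fun t t' => right_orbit_antimono t t' x y)
              (fun t t' => right_orbit_antimono t t' y z)) as [Hxy_yz | Hyz_xy].
  - pose proof (Hrot _ _ _ _ Hxy_yz) as Hyz_zx. rewrite Ex, Ey, Ez in Hyz_zx.
    pose proof (Hrot _ _ _ _ Hyz_zx) as Hzx_xy. rewrite Ey, Ez, Ex in Hzx_xy.
    intro t. split; auto.
  - pose proof (Hrot _ _ _ _ Hyz_xy) as Hzx_yz. rewrite Ey, Ez, Ex in Hzx_yz.
    pose proof (Hrot _ _ _ _ Hzx_yz) as Hxy_zx. rewrite Ez, Ex, Ey in Hxy_zx.
    intro t. split; auto.
Qed.

Section ThreeTransitive.

Hypothesis H3 : triply_transitive G X act.

Lemma right_orbit_change_target t u v w :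
  u <> v -> u <> w -> right_orbit t u v <-> right_orbit t u w.
Proof.
  intros Huv Huw. destruct (classic (v = w)) as [<- | Hvw]; [reflexivity |].
  destruct (H3 v u w u w v) as [f [Gf [Ev [Eu Ew]]]]; auto.
  split; intro Ht.
  - apply (right_orbit_rotate f v u w); auto. now apply right_orbit_sym.
  - apply right_orbit_sym. apply (right_orbit_rotate f v u w); auto.
Qed.

Lemma right_orbit_pair_independent t u v x y :
  u <> v -> x <> y -> right_orbit t u v <-> right_orbit t x y.
Proof.
  intros Huv Hxy.
  assert (Hswap : forall a b, right_orbit t a b <-> right_orbit t b a)
    by (split; apply right_orbit_sym).
  destruct (classic (u = y)) as [-> | Huy].
  - rewrite (right_orbit_change_target t y v x); auto.
  - rewrite (right_orbit_change_target t u v y), Hswap,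
      (right_orbit_change_target t y u x); auto.
Qed.

Lemma right_orbit_invariant f t x y :
  x <> y -> G f -> right_orbit t x y -> right_orbit (f t) x y.
Proof.
  intros Hxy Gf Ht. apply (right_orbit_conj f) in Ht; [| exact Gf].
  destruct (G_inv f Gf) as [fi [Gfi [Hfif _]]].
  apply (right_orbit_pair_independent _ (act f x) (act f y)); [| exact Hxy | exact Ht].
  intro E. apply Hxy. rewrite <- (act_cancel f fi x), E by assumption.
  now apply act_cancel.
Qed.

Lemma right_orbit_total x y :
  x <> y -> (forall t, right_orbit t x y) -> forall t u v, right_orbit t u v.
Proof.
  intros Hxy Hall t u v. destruct (classic (u = v)) as [-> | Huv].
  - apply right_orbit_refl.
  - apply (right_orbit_pair_independent t u v x y); auto.
Qed.

End ThreeTransitive.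

Lemma supported_stabilizer_acts_trivially w a b x :
  (forall t u v, right_orbit t u v) ->
  G w -> supported_in w a b -> act w x = x -> forall z, act w z = z.
Proof.
  intros Hfull Gw Hw Hwx z.
  destruct (Hfull (b + 1) x z) as [k [[Gk [c [d [Hc Hk]]]] <-]].
  assert (Hwk : (fun u => w (k u)) = (fun u => k (w u))).
  { extensionality u.
    apply (supported_in_commute w k a b c d); auto using G_strict_increasing; lra. }
  now rewrite <- act_comp, Hwk, act_comp, Hwx by assumption.
Qed.

(* [g] is corrected by an element [k] supported right of it with [k x = g x];
   the correction [k^-1 g] fixes [x], hence acts trivially, hence is the
   identity, so [g] agrees with [k] left of the support of [k]. *)
Lemma full_right_orbits_supported_trivial (x : X) g a b :
  faithful_action G X act -> (forall t u v, right_orbit t u v) ->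
  G g -> supported_in g a b -> forall p, g p = p.
Proof.
  intros Hfaith Hfull Gg Hg p.
  destruct (Rle_lt_dec p b) as [Hp | Hp]; [| apply Hg; right; exact Hp].
  destruct (Hfull (b + 1) x (act g x)) as [k [[Gk [c [d [Hc Hk]]]] Hkx]].
  destruct (G_inv k Gk) as [ki [Gki [Hkik Hkki]]].
  set (w := fun u => ki (g u)).
  assert (Gw : G w) by (apply (G_comp ki g); assumption).
  assert (Hwx : act w x = x)
    by (unfold w; rewrite (act_comp ki g), <- Hkx by assumption; now apply act_cancel).
  assert (Hw : supported_in w (Rmin c a) (Rmax d b))
    by (apply (supported_in_comp ki g); [exact (supported_in_inverse k ki c d Hk Hkik) | exact Hg]).
  pose proof (Hfaith w Gw (supported_stabilizer_acts_trivially w _ _ x Hfull Gw Hw Hwx) p)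
    as Hwp.
  unfold w in Hwp. rewrite <- (Hkki (g p)), Hwp. apply Hk. left. lra.
Qed.

End RightOrbits.

Theorem proposition5p2 (G : (R -> R) -> Prop) :
  subgroup_homeo_plus G ->
  no_global_fixed_point G ->
  G0_nontrivial G ->
  transitivity_degree_le G 2.
Proof.
  intros HG Hfree [g0 [Gg0 [[a [b Hg0]] Hp]]] X act k Hact Hfaith Htrans.
  destruct (Nat.le_gt_cases k 2) as [Hk | Hk]; [exact Hk | exfalso].
  pose proof (k_transitive_triply_transitive G X act k Hk Htrans) as H3.
  destruct (faithful_moves_point G X act g0 Hfaith Gg0 Hp) as [x Hx].
  assert (Hxy : x <> act g0 x) by (intro E; apply Hx; symmetry; exact E).
  set (T := fun t => right_orbit G X act t x (act g0 x)).
  assert (HT : T (a - 1)).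
  { exists g0. split; [split; [exact Gg0 | exists a, b; split; [lra | exact Hg0]] | reflexivity]. }
  destruct (classic (bound T)) as [Hbd | Hunbd].
  - destruct (completeness T Hbd (ex_intro _ _ HT)) as [m Hm].
    destruct (Hfree m) as [g [Gg Hgm]]. apply Hgm.
    destruct (G_inv G HG g Gg) as [gi [Ggi [Hgig Hggi]]].
    apply (is_lub_invariant_fixed T g gi m);
      [apply (G_strict_increasing G HG) .. | | | | | exact Hm]; try assumption;
      intros t Ht; now apply right_orbit_invariant.
  - destruct Hp as [p Hp]. apply Hp.
    apply (full_right_orbits_supported_trivial G X act HG Hact x g0 a b); auto.
    apply (right_orbit_total G X act HG Hact H3 x (act g0 x) Hxy).
    exact (down_closed_unbounded T
             (fun t t' => right_orbit_antimono G X act t t' x (act g0 x)) Hunbd).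
Qed.
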